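(* In the construction described in the context, $\sum_{i=1}^{t-1}c(C_i)\le 2B\log t\le 2B\log n$.
   Context: $\log$ denotes $\log_2$; $c(F)=\sum_{f\in F}c(f)$. Setting: $G=(V,E)$ is a connected finite undirected graph (parallel edges allowed), $w:E\to\mathbb{R}_{\ge0}$ edge weights, $c:E\to\mathbb{R}_{>0}$ edge costs, $n=|V|$. For $S\subseteq V$, $C_G(S)=\{e\in E:|e\cap S|=1\}$ (complete cut; its edges cross it) and $C_G(S,W)=\{e\in C_G(S):w(e)<W\}$ (partial cut). $F\subseteq E$ is a set with $G'=G\setminus F=(V,E\setminus F)$ connected; $B=c(F)$ and $\Delta=\mathrm{MST}(G')-\mathrm{MST}(G)$ (MST weights w.r.t. $w$). Construction: let $T$ be a minimum spanning tree of $G$ and $T\cap F=\{e_1,\dots,e_{t-1}\}$, with $t\ge2$. Removing these edges splits $T$ into components with vertex sets $A_1,\dots,A_t$ (a partition of $V$). Let $G'_{cc}$ be the multigraph with vertex set $V_{cc}=\{A_1,\dots,A_t\}$ having, for every edge $\{u,v\}\in E\setminus F$ with $u\in A_i$, $v\in A_j$, an edge between $A_i$ and $A_j$ of weight $w(\{u,v\})$ (identified with the original edge). Let $T'_{cc}$ be a minimum spanning tree of $G'_{cc}$, with edges $e'_1,\dots,e'_{t-1}$ indexed so that $w(e'_1)\le\dots\le w(e'_{t-1})$ (ties broken arbitrarily). For each $i$, deleting $e'_i,e'_{i+1},\dots,e'_{t-1}$ from $T'_{cc}$ leaves a forest in which $e'_i$ joins two components $L_i,R_i\subseteq V_{cc}$.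 Counters $k(A)=0$ for all $A\in V_{cc}$ initially, and $k(S)=\max_{A\in S}k(A)$. For $i=1,\dots,t-1$ in order: set $X_i=L_i$ if $k(L_i)\le k(R_i)$, else $X_i=R_i$; then increase $k(A)$ by $1$ for every $A\in X_i$. Identifying a set of vertices of $G'_{cc}$ with the union of the corresponding vertex sets in $V$, define $C_i=C_G(X_i,w(e'_i))$. *)

From HB Require Import structures.
From mathcomp Require Import all_boot all_order all_algebra.
From mathcomp Require Import reals.
From mathcomp Require exp.
Set Implicit Arguments. Unset Strict Implicit. Unset Printing Implicit Defensive.
Import Order.TTheory GRing.Theory Num.Theory.
Local Open Scope ring_scope.

(* Multigraphs are given by a finite vertex type W (with a vertex set Vs),
   a finite type E of edge identifiers (parallel edges allowed), and an
   endpoint map ends : E -> W * W (the edge {u,v} with ends e = (u,v)). *)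

Section Graphs.
Variables (W E : finType) (ends : E -> W * W).

Definition adj (S : {set E}) : rel W :=
  fun u v => [exists e in S, (ends e == (u, v)) || (ends e == (v, u))].

Definition comp (S : {set E}) (x : W) : {set W} := [set y | connect (adj S) x y].

Definition connected_on (Vs : {set W}) (S : {set E}) : Prop :=
  forall u v, u \in Vs -> v \in Vs -> connect (adj S) u v.

Definition spanning_tree (Vs : {set W}) (Es S : {set E}) : Prop :=
  [/\ S \subset Es, connected_on Vs S &
      forall e, e \in S -> ~ connected_on Vs (S :\ e)].

Definition is_mst {R : realType} (w : E -> R) (Vs : {set W}) (Es S : {set E}) : Prop :=
  spanning_tree Vs Es S /\
  forall S', spanning_tree Vs Es S' -> \sum_(e in S) w e <= \sum_(e in S') w e.

End Graphs.

Definition log2 {R : realType} (x : R) : R := exp.ln x / exp.ln 2.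

Definition cost {R : realType} {E : finType} (c : E -> R) (F : {set E}) : R :=
  \sum_(e in F) c e.

Definition pcut {R : realType} {V E : finType} (ends : E -> V * V) (w : E -> R)
  (S : {set V}) (W' : R) : {set E} :=
  [set e | (#|[set (ends e).1; (ends e).2] :&: S| == 1)%N && (w e < W')].

Section Construction.
Variables (V E : finType) (ends : E -> V * V) (T F : {set E}).

Definition cc_of (x : V) : {set V} := comp ends (T :\: F) x.

Definition Vcc : {set {set V}} := [set cc_of x | x : V].

Definition ends_cc (e : E) : {set V} * {set V} :=
  (cc_of (ends e).1, cc_of (ends e).2).

Definition Lside (pre : seq E) (e : E) : {set {set V}} :=
  comp ends_cc [set f in pre] (ends_cc e).1.
Definition Rside (pre : seq E) (e : E) : {set {set V}} :=
  comp ends_cc [set f in pre] (ends_cc e).2.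

Definition kmax (k : {set V} -> nat) (S : {set {set V}}) : nat :=
  (\max_(A in S) k A)%N.

(* Run of the procedure: given current counters k, the already processed
   edges pre = e'_1..e'_{i-1}, and the remaining edges rest = e'_i..e'_{t-1},
   returns the list of pairs (X_j, e'_j) for j = i..t-1. *)
Fixpoint run (k : {set V} -> nat) (pre rest : seq E)
  : seq ({set {set V}} * E) :=
  match rest with
  | [::] => [::]
  | e :: rest' =>
      let L := Lside pre e in
      let Rs := Rside pre e in
      let X := if (kmax k L <= kmax k Rs)%N then L else Rs in
      (X, e) :: run (fun A => (k A + (A \in X))%N) (rcons pre e) rest'
  end.

End Construction.

(* identify a set of vertices of G'_cc with the union of the corresponding sets *)
Definition flat {V : finType} (X : {set {set V}}) : {set V} := \bigcup_(A in X) A.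

From Pilot Require Import Defs.
From HB Require Import structures.
From mathcomp Require Import all_boot all_order all_algebra.
From mathcomp Require Import reals.
From mathcomp Require exp.
Set Implicit Arguments. Unset Strict Implicit. Unset Printing Implicit Defensive.
Import Order.TTheory GRing.Theory Num.Theory.

(* By the cut property
   of the minimum spanning tree T'_cc, an edge of G' lighter than e'_i is already
   spanned by e'_1, ..., e'_(i-1), so it cannot cross X_i; hence C_i is a set of
   edges of F.  Charging c(f) to the components A_j containing the endpoints of
   f, each f is charged c(f) times the number of i with A_j in X_i, for both of
   its endpoints.  Because counters are always raised on the side with the
   smaller maximum, every component S of the growing forest satisfies
   2 ^ k(S) <= |S|, so each A_j lies in at most log t of the X_i.  Finally
   t = |V_cc| = |T :&: F| + 1 <= n, since deleting each tree edge of F from T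
   adds one component. *)

Section Connectivity.
Variables (W E : finType) (ends : E -> W * W).
Local Notation adj := (Defs.adj ends).
Local Notation comp := (Defs.comp ends).

Lemma adjP (S : {set E}) u v :
  reflect (exists2 e, e \in S & ends e = (u, v) \/ ends e = (v, u)) (adj S u v).
Proof.
apply: (iffP existsP) => [[e /andP[eS /orP[/eqP H|/eqP H]]]|[e eS [H|H]]];
  exists e => //; auto; by rewrite eS H eqxx ?orbT.
Qed.

Lemma adj_sym (S : {set E}) : symmetric (adj S).
Proof. by move=> u v; apply/adjP/adjP => -[e eS H]; exists e => //; tauto. Qed.

Lemma connect_adj_sym (S : {set E}) : connect_sym (adj S).
Proof. exact/sym_connect_sym/adj_sym. Qed.

Lemma connect_adj_eq (S : {set E}) x y z :
  connect (adj S) x y -> connect (adj S) x z = connect (adj S) y z.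
Proof.
move=> cxy; apply/idP/idP => [|cyz]; last exact: connect_trans cxy cyz.
by apply: connect_trans; rewrite connect_adj_sym.
Qed.

Lemma comp_eq (S : {set E}) x y : connect (adj S) x y -> comp S x = comp S y.
Proof. by move=> cxy; apply/setP => z; rewrite !inE (connect_adj_eq z cxy). Qed.

Lemma comp_mem_eq (S : {set E}) x y : x \in comp S y -> comp S y = comp S x.
Proof. by rewrite inE; apply: comp_eq. Qed.

Lemma mem_comp_eq (S : {set E}) x y a :
  connect (adj S) x y -> (x \in comp S a) = (y \in comp S a).
Proof. by move=> cxy; rewrite !inE !(connect_adj_sym S a) (connect_adj_eq _ cxy). Qed.

Lemma adj_ends (S : {set E}) e : e \in S -> adj S (ends e).1 (ends e).2.
Proof. by move=> eS; apply/adjP; exists e => //; left; case: (ends e). Qed.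

Lemma adj_subset (S1 S2 : {set E}) u v : S1 \subset S2 -> adj S1 u v -> adj S2 u v.
Proof. by move=> sub /adjP[e eS H]; apply/adjP; exists e; first exact: (subsetP sub). Qed.

Lemma connect_subset (S1 S2 : {set E}) u v :
  S1 \subset S2 -> connect (adj S1) u v -> connect (adj S2) u v.
Proof. by move=> sub; apply: connect_sub => x y /(adj_subset sub)/connect1. Qed.

Lemma connect_setD1 (S : {set E}) g x y : connect (adj S) x y ->
  [|| connect (adj (S :\ g)) x y,
      connect (adj (S :\ g)) x (ends g).1 && connect (adj (S :\ g)) y (ends g).2 |
      connect (adj (S :\ g)) x (ends g).2 && connect (adj (S :\ g)) y (ends g).1].
Proof.
have Hs := connect_adj_sym (S :\ g).
case/connectP => p pth ->; elim: p x pth => [|z p IH] x /=; first by rewrite connect0.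
case/andP => /adjP[e eS He] /IH.
have [eg|neg] := eqVneq e g.
  rewrite eg in He; case: He => -> /= /or3P[H|/andP[_ H]|/andP[_ H]];
    rewrite connect0 /=.
  - by rewrite (Hs _ z) H orbT.
  - by rewrite H orbT.
  - by rewrite (Hs x) H.
  - by rewrite (Hs (last z p) z) H !orbT.
  - by rewrite (Hs x) H.
  - by rewrite H !orbT.
have exz : connect (adj (S :\ g)) x z.
  by apply/connect1/adjP; exists e; rewrite ?inE ?neg.
by rewrite !(connect_adj_eq _ exz).
Qed.

Lemma connect_setU1 (P : {set E}) e x y : e \notin P ->
  connect (adj (e |: P)) x y =
  [|| connect (adj P) x y,
      connect (adj P) x (ends e).1 && connect (adj P) y (ends e).2 |
      connect (adj P) x (ends e).2 && connect (adj P) y (ends e).1].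
Proof.
move=> eP; have sub : P \subset e |: P by apply: subsetUr.
have ce : connect (adj (e |: P)) (ends e).1 (ends e).2.
  by apply/connect1/adj_ends; rewrite !inE eqxx.
have Hs := connect_adj_sym (e |: P).
apply/idP/idP; first by move/(connect_setD1 e); rewrite setU1K.
case/or3P => [/(connect_subset sub) //|/andP[H1 H2]|/andP[H1 H2]].
- move: H1 H2 => /(connect_subset sub) H1 /(connect_subset sub) H2.
  by apply: connect_trans H1 (connect_trans ce _); rewrite Hs.
- move: H1 H2 => /(connect_subset sub) H1 /(connect_subset sub) H2.
  by apply: connect_trans H1 (connect_trans _ _); rewrite Hs; [exact: ce|].
Qed.

Lemma comp_setU1 (P : {set E}) e x : e \notin P ->
  comp (e |: P) x =
  if connect (adj P) x (ends e).1 || connect (adj P) x (ends e).2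
  then comp P (ends e).1 :|: comp P (ends e).2 else comp P x.
Proof.
move=> eP; have Hs := connect_adj_sym P.
case: ifP => [/orP[]cx|/norP[/negbTE nx1 /negbTE nx2]]; apply/setP => y;
  rewrite !inE connect_setU1 //; last by rewrite nx1 nx2 /= !orbF.
all: rewrite !(connect_adj_eq _ cx) connect0 !(Hs y).
all: by case: (connect _ (ends e).1 y); case: (connect _ (ends e).2 y);
  rewrite /= ?andbT ?andbF ?orbT ?orbF.
Qed.

Lemma comp_disjoint (P : {set E}) a b :
  ~~ connect (adj P) a b -> comp P a :&: comp P b = set0.
Proof.
move=> nab; apply/setP => y; rewrite !inE; apply/negP => /andP[ay by'].
by move: nab; rewrite (connect_adj_eq _ ay) connect_adj_sym by'.
Qed.

End Connectivity.

Section SpanningTrees.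
Variables (W E : finType) (ends : E -> W * W).
Local Notation adj := (Defs.adj ends).

Lemma connected_on_setD1 (Vs : {set W}) (S S' : {set E}) g :
  connected_on ends Vs S -> S :\ g \subset S' ->
  connect (adj S') (ends g).1 (ends g).2 -> connected_on ends Vs S'.
Proof.
move=> cS sub cg u v uV vV; apply: connect_sub (cS u v uV vV) => x y /adjP[e eS He].
have [eg|neg] := eqVneq e g; last first.
  by apply/connect1/adjP; exists e => //; apply: (subsetP sub); rewrite !inE neg.
by rewrite eg in He; case: He => He; rewrite He /= in cg; rewrite // connect_adj_sym.
Qed.

Lemma spanning_tree_bridge (Vs : {set W}) (Es S : {set E}) g :
  spanning_tree ends Vs Es S -> g \in S ->
  ~~ connect (adj (S :\ g)) (ends g).1 (ends g).2.
Proof.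
case=> _ cS minS gS; apply/negP => cg.
exact: minS g gS (connected_on_setD1 cS (subxx _) cg).
Qed.

Definition connectedb (Vs : {set W}) (S : {set E}) : bool :=
  [forall u in Vs, forall v in Vs, connect (adj S) u v].

Lemma connectedbP (Vs : {set W}) (S : {set E}) :
  reflect (connected_on ends Vs S) (connectedb Vs S).
Proof.
apply: (iffP forall_inP) => [cS u v uV vV|cS u uV].
  by have /forall_inP := cS u uV; apply.
by apply/forall_inP => v vV; apply: cS.
Qed.

Lemma connected_spanning_tree (Vs : {set W}) (Es S : {set E}) :
  S \subset Es -> connected_on ends Vs S ->
  exists2 S' : {set E}, S' \subset S & spanning_tree ends Vs Es S'.
Proof.
move=> SEs cS.
pose Q (S' : {set E}) := (S' \subset S) && connectedb Vs S'.
have PS : Q S by rewrite /Q subxx; apply/connectedbP.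
have [S' /andP[S'S /connectedbP cS'] minS'] := arg_minnP (fun S' : {set E} => #|S'|) PS.
exists S' => //; split => //; first exact: subset_trans S'S SEs.
move=> e eS' /connectedbP ce.
have /minS' : Q (S' :\ e) by rewrite /Q ce (subset_trans (subD1set _ _) S'S).
by rewrite (cardsD1 e S') eS' add1n ltnn.
Qed.

(* The last edge added to a maximal a,b-disconnected subgraph of S above P. *)
Lemma exists_connecting_edge (S P : {set E}) a b :
  P \subset S -> ~~ connect (adj P) a b -> connect (adj S) a b ->
  exists (U : {set E}) g, [/\ P \subset U, g |: U \subset S, g \notin U,
    ~~ connect (adj U) a b & connect (adj (g |: U)) a b].
Proof.
move=> PS nP cS.
pose Q (U : {set E}) := [&& P \subset U, U \subset S & ~~ connect (adj U) a b].
have QP : Q P by rewrite /Q subxx PS.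
have [U /and3P[PU US nU] maxU] := arg_maxnP (fun U : {set E} => #|U|) QP.
have /set0Pn[g] : S :\: U != set0.
  rewrite setD_eq0; apply: contra nU => SU.
  by rewrite (_ : U = S) //; apply/eqP; rewrite eqEsubset US.
rewrite inE => /andP[gU gS].
have gUS : g |: U \subset S by rewrite subUset sub1set gS.
exists U, g; split => //; apply/idPn => ngU.
have /maxU : Q (g |: U) by rewrite /Q gUS ngU (subset_trans PU (subsetUr _ _)).
by rewrite /= cardsU1 gU add1n ltnn.
Qed.

Lemma spanning_tree_swap (Vs : {set W}) (Es S : {set E}) g f :
  spanning_tree ends Vs Es S -> g \in S -> f \in Es ->
  connect (adj S) (ends f).1 (ends f).2 ->
  ~~ connect (adj (S :\ g)) (ends f).1 (ends f).2 ->
  exists2 S' : {set E}, S' \subset f |: (S :\ g) & spanning_tree ends Vs Es S'.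
Proof.
move=> [SEs cS _] gS fE cf nf.
have fS : f \notin S :\ g by apply: contra nf => /adj_ends/connect1.
apply: connected_spanning_tree.
  by rewrite subUset sub1set fE (subset_trans (subD1set _ _) SEs).
apply: (connected_on_setD1 cS (subsetUr _ _)).
have Hs := connect_adj_sym ends (S :\ g).
rewrite connect_setU1 //; move: (connect_setD1 g cf); rewrite (negbTE nf) /=.
by case/orP=> /andP[H1 H2]; rewrite Hs in H1; rewrite Hs in H2; rewrite H1 H2 ?orbT.
Qed.

End SpanningTrees.

Section MinimumSpanningTrees.
Variables (R : realType) (W E : finType) (ends : E -> W * W) (w : E -> R).
Local Notation adj := (Defs.adj ends).
Local Open Scope ring_scope.
Hypothesis w_ge0 : forall e, 0 <= w e.

Lemma sum_le_subset (A B : {set E}) :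
  A \subset B -> \sum_(e in A) w e <= \sum_(e in B) w e.
Proof.
move=> AB; rewrite [X in _ <= X](big_setID A) /= (setIidPr AB) lerDl.
exact: sumr_ge0.
Qed.

Lemma sum_setU1_le (A : {set E}) f :
  \sum_(e in f |: A) w e <= w f + \sum_(e in A) w e.
Proof.
have [fA|fA] := boolP (f \in A); last by rewrite big_setU1.
by rewrite (setUidPr _) ?sub1set // lerDr.
Qed.

(* Otherwise f could replace the edge g of S that first joins the endpoints of
   f to a subgraph containing P, giving a lighter spanning tree. *)
Lemma mst_connect_lighter (Vs : {set W}) (Es S P : {set E}) f :
  is_mst ends w Vs Es S -> P \subset S -> f \in Es ->
  (ends f).1 \in Vs -> (ends f).2 \in Vs ->
  (forall g, g \in S -> g \notin P -> w f < w g) ->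
  connect (adj P) (ends f).1 (ends f).2.
Proof.
move=> [Sst Smin] PS fE aV bV lighter; apply/idPn => nP.
have [_ cS _] := Sst; have cf := cS _ _ aV bV.
have [U [g [PU gUS gU nU cgU]]] := exists_connecting_edge PS nP cf.
move: gUS; rewrite subUset sub1set => /andP[gS US].
have wfg : w f < w g by apply: lighter => //; apply: contra gU; apply: (subsetP PU).
have nSg : ~~ connect (adj (S :\ g)) (ends f).1 (ends f).2.
  apply: contra (spanning_tree_bridge Sst gS) => cSg.
  have USg : U \subset S :\ g.
    by apply/subsetP => x xU; rewrite !inE (subsetP US) // andbT; apply: contraNneq gU => <-.
  have Hs := connect_adj_sym ends (S :\ g).
  move: cgU; rewrite connect_setU1 // (negbTE nU) /=.
  case/orP=> /andP[/(connect_subset USg) H1 /(connect_subset USg) H2]; rewrite Hs in H1.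
    exact: connect_trans H1 (connect_trans cSg H2).
  by rewrite Hs; exact: connect_trans H1 (connect_trans cSg H2).
have [S' S'sub S'st] := spanning_tree_swap Sst gS fE cf nSg.
have := le_trans (Smin S' S'st) (le_trans (sum_le_subset S'sub) (sum_setU1_le _ f)).
by rewrite (big_setD1 g gS) /= lerD2r leNgt wfg.
Qed.

End MinimumSpanningTrees.

Section Components.
Variables (W E : finType) (ends : E -> W * W).
Local Notation adj := (Defs.adj ends).
Local Notation comp := (Defs.comp ends).

Definition comps (S : {set E}) : {set {set W}} := [set comp S x | x : W].

(* Deleting a bridge g splits the component of g in two and keeps the others:
   merging the two halves back is injective on the components other than
   that of the second endpoint. *)
Lemma card_comps_setD1 (S : {set E}) g : g \in S ->
  ~~ connect (adj (S :\ g)) (ends g).1 (ends g).2 ->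
  #|comps (S :\ g)| = #|comps S| + 1.
Proof.
move=> gS ng; set S' := S :\ g.
set C1 := comp S' (ends g).1; set C2 := comp S' (ends g).2.
pose special (C : {set W}) := ((ends g).1 \in C) || ((ends g).2 \in C).
pose h (C : {set W}) := if special C then C1 :|: C2 else C.
have hcomp x : h (comp S' x) = comp S x.
  by rewrite -(setD1K gS) comp_setU1 ?setD11 // /h /special !inE.
have C2S' : C2 \in comps S' by apply: imset_f.
have specialE C : C \in comps S' :\ C2 -> special C -> C = C1.
  case/setD1P => nC2 /imsetP[x _ eCx]; rewrite {C}eCx in nC2 *.
  by case/orP=> /comp_mem_eq eC //; rewrite eC eqxx in nC2.
have hinj : {in comps S' :\ C2 &, injective h}.
  move=> C C' HC HC'; rewrite /h.
  case sC: (special C); case sC': (special C'); last by [].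
  - by rewrite (specialE _ HC sC) (specialE _ HC' sC').
  - by move=> eC'; move: sC'; rewrite /special -eC' !inE connect0.
  - by move=> eC; move: sC; rewrite /special eC !inE connect0.
have hS : h @: (comps S' :\ C2) = comps S.
  apply/setP => C; apply/imsetP/imsetP => [[_ /setD1P[_ /imsetP[x _ ->]] ->]|[x _ ->]].
    by exists x; rewrite ?hcomp.
  have [ex|nex] := eqVneq (comp S' x) C2.
    exists C1; last by rewrite -hcomp ex /h /special !inE !connect0 !orbT.
    rewrite !inE imset_f // andbT; apply: contra ng => /eqP eC.
    have : (ends g).2 \in C2 by rewrite /C2 inE connect0.
    by rewrite -eC /C1 inE.
  by exists (comp S' x); rewrite ?hcomp // !inE nex imset_f.
by rewrite -hS (card_in_imset hinj) (cardsD1 C2) C2S' add1n addn1.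
Qed.

Lemma card_comps_spanning_tree (Es T D : {set E}) (x0 : W) :
  spanning_tree ends [set: W] Es T -> #|comps (T :\: D)| = #|T :&: D| + 1.
Proof.
move=> Tst; have [_ cT _] := Tst.
move TDn : #|T :&: D| => n; elim: n D TDn => [|n IH] D TDn.
  move/eqP: TDn; rewrite cards_eq0 setI_eq0 => /setDidPl ->.
  suff -> : comps T = [set comp T x0] by rewrite cards1.
  apply/setP => C; rewrite !inE; apply/imsetP/eqP => [[x _ ->]|->]; last by exists x0.
  by apply/esym/comp_eq/cT.
have /set0Pn[g] : T :&: D != set0 by rewrite -card_gt0 TDn.
rewrite inE => /andP[gT gD].
have -> : T :\: D = (T :\: (D :\ g)) :\ g.
  by apply/setP => x; rewrite !inE; case: (eqVneq x g) => // ->; rewrite gD.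
have TDg : #|T :&: (D :\ g)| = n.
  by apply/eqP; rewrite -eqSS -TDn (cardsD1 g (T :&: D)) inE gT gD setIDA.
rewrite card_comps_setD1 ?inE ?eqxx ?gT ?(IH _ TDg) ?addn1 //.
apply: contra (spanning_tree_bridge Tst gT); apply: connect_subset.
by apply/subsetP => x; rewrite !inE => /andP[-> /andP[_ ->]].
Qed.

End Components.

Lemma kmax_ge (V : finType) (k : {set V} -> nat) (S : {set {set V}}) A :
  A \in S -> k A <= kmax k S.
Proof. exact: leq_bigmax_cond. Qed.

Lemma exp_kmax_merge (V : finType) (k : {set V} -> nat) (X Y : {set {set V}}) a :
  a \in X -> X :&: Y = set0 -> kmax k X <= kmax k Y ->
  2 ^ kmax k X <= #|X| -> 2 ^ kmax k Y <= #|Y| ->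
  2 ^ kmax (fun A => k A + (A \in X)) (X :|: Y) <= #|X :|: Y|.
Proof.
move=> aX XY kXY hX hY.
have ne : 0 < #|X :|: Y| by apply/card_gt0P; exists a; rewrite inE aX.
rewrite {1}/kmax cardsU XY cards0 subn0.
have [A AXY ->] := eq_bigmax_cond (fun A => k A + (A \in X)) ne.
have [AX|AY] := boolP (A \in X).
  rewrite addn1 expnS mul2n -addnn leq_add //.
    by apply: leq_trans hX; rewrite leq_pexp2l ?kmax_ge.
  by apply: leq_trans hY; rewrite leq_pexp2l // (leq_trans (kmax_ge k AX)).
move: AXY; rewrite inE (negbTE AY) addn0 /= => AY'.
by apply: leq_trans (leq_addl _ _); apply: leq_trans hY; rewrite leq_pexp2l ?kmax_ge.
Qed.

Section ContractedGraph.
Variables (V E : finType) (ends : E -> V * V) (T F : {set E}).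
Local Notation ends' := (ends_cc ends T F).
Local Notation Vcc := (Vcc ends T F).
Local Notation adj' := (Defs.adj ends').
Local Notation comp' := (Defs.comp ends').

Lemma ends_cc_Vcc e : (ends' e).1 \in Vcc /\ (ends' e).2 \in Vcc.
Proof. by split; apply: imset_f. Qed.

Lemma comp_cc_sub (S : {set E}) A : A \in Vcc -> comp' S A \subset Vcc.
Proof.
move=> AV; apply/subsetP => B; rewrite inE => cAB; rewrite -(closed_connect _ cAB) //.
by move=> x y /adjP[e _ [] He]; have := ends_cc_Vcc e; rewrite He => -[-> ->].
Qed.

Lemma mem_flat (X : {set {set V}}) x :
  X \subset Vcc -> (x \in flat X) = (cc_of ends T F x \in X).
Proof.
move=> XV; apply/bigcupP/idP => [[A AX xA]|xX]; last by exists (cc_of ends T F x); rewrite ?inE.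
have /imsetP[y _ Ay] := subsetP XV A AX.
by move: xA; rewrite Ay inE => /comp_eq; rewrite /cc_of => <-; rewrite -/(cc_of ends T F y) -Ay.
Qed.

Definition counters_bounded (k : {set V} -> nat) (P : {set E}) :=
  forall A, A \in Vcc -> 2 ^ kmax k (comp' P A) <= #|comp' P A|.

Variable Tp : {set E}.
Hypothesis Tp_tree : spanning_tree ends' Vcc (~: F) Tp.

Lemma counters_bounded_rcons k pre e :
  {subset rcons pre e <= Tp} -> uniq (rcons pre e) ->
  counters_bounded k [set f in pre] ->
  let X := if kmax k (Lside ends T F pre e) <= kmax k (Rside ends T F pre e)
           then Lside ends T F pre e else Rside ends T F pre e in
  counters_bounded (fun A => k A + (A \in X)) [set f in rcons pre e].
Proof.
move=> sub; rewrite rcons_uniq => /andP[epre _] kb X B BV.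
set P := [set f in pre]; set a := (ends' e).1; set b := (ends' e).2.
have eP : e \notin P by rewrite inE.
have eT : e \in Tp by apply: sub; rewrite mem_rcons inE eqxx.
have nab : ~~ connect (adj' P) a b.
  apply: contra (spanning_tree_bridge Tp_tree eT); apply: connect_subset.
  apply/subsetP => f; rewrite !inE => fpre; rewrite sub ?mem_rcons ?inE ?fpre ?orbT //.
  by rewrite andbT; apply: contraNneq epre => <-.
have [aV bV] := ends_cc_Vcc e.
have aL : a \in comp' P a by rewrite inE connect0.
have bR : b \in comp' P b by rewrite inE connect0.
have -> : [set f in rcons pre e] = e |: P by apply/setP => f; rewrite !inE mem_rcons inE.
rewrite comp_setU1 //; case: ifP => [_|/norP[nBa nBb]].
  rewrite /X /Lside /Rside -/P -/a -/b.
  case: (leqP (kmax k (comp' P a)) (kmax k (comp' P b))) => kab.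
    exact: exp_kmax_merge aL (comp_disjoint nab) kab (kb _ aV) (kb _ bV).
  rewrite setUC; apply: exp_kmax_merge bR _ (ltnW kab) (kb _ bV) (kb _ aV).
  by rewrite setIC comp_disjoint.
have BX : [disjoint comp' P B & X].
  by rewrite -setI_eq0 /X; case: ifP => _; rewrite comp_disjoint.
rewrite /kmax; under eq_bigr => A AB do rewrite (disjointFr BX AB) addn0.
exact: kb.
Qed.

Lemma run_count_bound rest k pre :
  uniq (pre ++ rest) -> {subset pre ++ rest <= Tp} ->
  counters_bounded k [set f in pre] -> forall A, A \in Vcc ->
  2 ^ (k A + count (fun p : {set {set V}} * E => A \in p.1) (run ends T F k pre rest))
    <= #|Vcc|.
Proof.
elim: rest k pre => [|e rest IH] k pre U sub kb A AV /=.
  have AP : A \in comp' [set f in pre] A by rewrite inE connect0.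
  rewrite addn0; apply: leq_trans (leq_pexp2l (isT : 0 < 2) (kmax_ge k AP)) _.
  exact: leq_trans (kb A AV) (subset_leq_card (comp_cc_sub _ AV)).
rewrite addnA; apply: IH; rewrite ?cat_rcons //.
move: U sub; rewrite -cat_rcons cat_uniq => /and3P[U _ _] sub.
by apply: counters_bounded_rcons => // f fpre; apply: sub; rewrite mem_cat fpre.
Qed.

End ContractedGraph.

Lemma card_set2I (T : finType) (x y : T) (S : {set T}) : x != y ->
  #|[set x; y] :&: S| = (x \in S) + (y \in S).
Proof.
move=> nxy; case xS: (x \in S); case yS: (y \in S).
- by rewrite (setIidPl _) ?cards2 ?nxy // subUset !sub1set xS yS.
- suff -> : [set x; y] :&: S = [set x] by rewrite cards1.
  apply/setP => z; rewrite !inE; have [->|_] := eqVneq z x; first by rewrite xS.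
  by have [->|_] := eqVneq z y; rewrite ?yS ?andbF.
- suff -> : [set x; y] :&: S = [set y] by rewrite cards1.
  apply/setP => z; rewrite !inE; have [->|_] := eqVneq z x.
    by rewrite xS andbF (negbTE nxy).
  by have [->|_] := eqVneq z y; rewrite ?yS.
- suff -> : [set x; y] :&: S = set0 by rewrite cards0.
  apply/setP => z; rewrite !inE; have [->|_] := eqVneq z x; first by rewrite xS.
  by have [->|_] := eqVneq z y; rewrite ?yS ?andbF.
Qed.

Section Cuts.
Variables (R : realType) (V E : finType) (ends : E -> V * V) (w : E -> R).
Local Open Scope ring_scope.

Lemma mem_pcut (S : {set V}) W' f : (ends f).1 != (ends f).2 ->
  (f \in pcut ends w S W') = (((ends f).1 \in S) != ((ends f).2 \in S)) && (w f < W').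
Proof.
move=> nl; rewrite inE card_set2I //.
by case: ((ends f).1 \in S); case: ((ends f).2 \in S).
Qed.

End Cuts.

Lemma mem_run (V E : finType) (ends : E -> V * V) (T F : {set E}) rest k pre p :
  p \in run ends T F k pre rest ->
  exists pre1 e rest1, [/\ rest = pre1 ++ e :: rest1, p.2 = e &
    p.1 = Lside ends T F (pre ++ pre1) e \/ p.1 = Rside ends T F (pre ++ pre1) e].
Proof.
elim: rest k pre => [|e rest IH] k pre //=; rewrite inE => /orP[/eqP ->|].
  by exists [::], e, rest; rewrite cats0; split => //; case: ifP => _; [left|right].
case/IH => pre1 [e' [rest1 [-> H2 H3]]].
by exists (e :: pre1), e', rest1; split; rewrite // -cat_rcons.
Qed.

Lemma natr_count (R : pzSemiRingType) (I : Type) (r : seq I) (P : pred I) :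
  ((count P r)%:R = \sum_(i <- r) (P i)%:R :> R)%R.
Proof. by elim: r => [|x r IH]; rewrite ?big_nil // big_cons /= natrD IH. Qed.

Section Charging.
Variables (R : realType) (V E : finType) (ends : E -> V * V) (w c : E -> R).
Variables (T F Tp : {set E}).
Local Notation ends' := (ends_cc ends T F).
Local Notation Vcc := (Vcc ends T F).
Local Notation adj' := (Defs.adj ends').
Local Notation cc := (cc_of ends T F).
Local Open Scope ring_scope.
Hypothesis no_loop : forall e, (ends e).1 != (ends e).2.

(* Cut property in G'_cc: an edge of G' lighter than e'_i would already be
   spanned by e'_1, ..., e'_(i-1), so it cannot cross X_i. *)
Lemma run_pcut_subset s k p :
  is_mst ends' w Vcc (~: F) Tp -> (forall e, 0 <= w e) ->
  perm_eq s (enum Tp) -> sorted (fun a b => w a <= w b) s ->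
  p \in run ends T F k [::] s ->
  p.1 \subset Vcc /\ pcut ends w (flat p.1) (w p.2) \subset F.
Proof.
move=> Tp_mst w0 s_perm s_sorted /mem_run[pre1 [e [rest1 [s_split -> Xe]]]].
have XV : p.1 \subset Vcc.
  by have [aV bV] := ends_cc_Vcc ends T F e; case: Xe => ->; apply: comp_cc_sub.
split => //; apply/subsetP => f; rewrite mem_pcut // !(mem_flat _ XV) => /andP[sep wfe].
apply/idPn => fF; have [fa fb] := ends_cc_Vcc ends T F f.
have inTp g : (g \in Tp) = (g \in pre1 ++ e :: rest1).
  by rewrite -s_split -mem_enum (perm_mem s_perm).
have cf : connect (adj' [set g in pre1]) (cc (ends f).1) (cc (ends f).2).
  apply: (mst_connect_lighter w0 Tp_mst); rewrite ?inE //.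
    by apply/subsetP => g; rewrite inE inTp mem_cat => ->.
  move=> g; rewrite inTp mem_cat inE => /orP[-> //|ger _]; apply: lt_le_trans wfe _.
  move: ger; rewrite inE => /orP[/eqP -> //|grest].
  have w_trans : transitive (fun a b => w a <= w b) by move=> ? ? ?; apply: le_trans.
  move: s_sorted; rewrite s_split sorted_cat_cons => /andP[_].
  by move/(path.order_path_min w_trans)/allP; apply.
by move: sep; case: Xe => ->; rewrite (mem_comp_eq _ cf) eqxx.
Qed.

Lemma sum_cost_pcut_le (r : seq ({set {set V}} * E)) :
  (forall e, 0 < c e) ->
  (forall p, p \in r -> p.1 \subset Vcc /\ pcut ends w (flat p.1) (w p.2) \subset F) ->
  \sum_(p <- r) cost c (pcut ends w (flat p.1) (w p.2)) <=
  \sum_(f in F) c f *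
    ((count (fun p : {set {set V}} * E => cc (ends f).1 \in p.1) r)%:R +
     (count (fun p : {set {set V}} * E => cc (ends f).2 \in p.1) r)%:R).
Proof.
move=> c0 rF; under [X in _ <= X]eq_bigr => f _ do
  rewrite !natr_count -big_split /= mulr_sumr.
rewrite [X in _ <= X]exchange_big /= big_seq [X in _ <= X]big_seq.
apply: ler_sum => p /rF[XV pF]; rewrite /cost big_mkcond [X in _ <= X]big_mkcond /=.
apply: ler_sum => f _; case: ifP => fp.
  rewrite (subsetP pF f fp) ler_pMr //.
  move: fp; rewrite mem_pcut // !(mem_flat _ XV).
  by case: (cc (ends f).1 \in p.1); case: (cc (ends f).2 \in p.1) => //= _;
    rewrite ?addr0 ?add0r ler1n.
by case: ifP => _; rewrite ?lexx // mulr_ge0 ?addr_ge0 ?ler0n ?ltW ?c0.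
Qed.

End Charging.

Section Log2.
Variable R : realType.
Local Open Scope ring_scope.

Lemma log2_ge_nat (m N : nat) : (2 ^ m <= N)%N -> m%:R <= log2 (N%:R : R).
Proof.
move=> mN; have N0 : (0 < N)%N by apply: leq_trans mN; rewrite expn_gt0.
rewrite /log2 ler_pdivlMr ?exp.ln_gt0 ?ltr1n // mulr_natl -exp.lnXn //.
by rewrite exp.ler_ln ?posrE ?exprn_gt0 ?ltr0n // -natrX ler_nat.
Qed.

Lemma ler_log2_nat (a b : nat) : (0 < a)%N -> (a <= b)%N -> log2 (a%:R : R) <= log2 b%:R.
Proof.
move=> a0 ab; rewrite /log2 ler_wpM2r ?invr_ge0 ?exp.ln_ge0 ?ler1n //.
by rewrite exp.ler_ln ?posrE ?ltr0n ?ler_nat // (leq_trans a0 ab).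
Qed.

End Log2.

Unset Implicit Arguments.
Local Open Scope ring_scope.

Theorem mainTheorem10 (R : realType) (V E : finType) (ends : E -> V * V)
  (w c : E -> R) (F T T' : {set E}) (s : seq E) :
  (* no loops *)
  (forall e, (ends e).1 != (ends e).2) ->
  (* G connected, weights nonnegative, costs positive *)
  connected_on ends [set: V] [set: E] ->
  (forall e, 0 <= w e) ->
  (forall e, 0 < c e) ->
  (* G' = G \ F connected *)
  connected_on ends [set: V] (~: F) ->
  (* T a minimum spanning tree of G with T ∩ F nonempty (t >= 2) *)
  is_mst ends w [set: V] [set: E] T ->
  (2 <= #|T :&: F|.+1)%N ->
  (* T'_cc a minimum spanning tree of G'_cc *)
  is_mst (ends_cc ends T F) w (Vcc ends T F) (~: F) T' ->
  (* s = e'_1, ..., e'_{t-1}: the edges of T'_cc sorted by nondecreasing weight *)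
  perm_eq s (enum T') ->
  sorted (fun a b => w a <= w b) s ->
  let B := cost c F in
  let t := #|T :&: F|.+1 in
  let n := #|V| in
  \sum_(p <- run ends T F (fun _ => 0%N) [::] s) cost c (pcut ends w (flat p.1) (w p.2))
    <= 2 * B * log2 (t%:R) /\
  2 * B * log2 (t%:R) <= 2 * B * log2 (n%:R).
Proof.
move=> no_loop _ w_ge0 c_gt0 _ T_mst t_ge2 T'_mst s_perm s_sorted B t n.
have [g0 _] : exists g0, g0 \in T :&: F by apply/card_gt0P.
have card_Vcc : #|Vcc ends T F| = t.
  by rewrite /t -addn1; apply: (card_comps_spanning_tree _ (ends g0).1 T_mst.1).
set r := run ends T F (fun _ => 0%N) [::] s.
have count_le A : A \in Vcc ends T F ->
    (count (fun p : {set {set V}} * E => A \in p.1) r)%:R <= log2 (t%:R : R).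
  move=> AV; apply: log2_ge_nat; rewrite -card_Vcc.
  apply: (run_count_bound T'_mst.1 (k := fun _ => 0%N)) => //=.
  - by rewrite (perm_uniq s_perm) enum_uniq.
  - by move=> f; rewrite (perm_mem s_perm) mem_enum.
  - move=> A' _; rewrite /kmax big1_eq card_gt0; apply/set0Pn.
    by exists A'; rewrite inE connect0.
have cost_ge0 : 0 <= B by apply: sumr_ge0 => f _; apply: ltW.
split; last first.
  by rewrite ler_wpM2l ?mulr_ge0 // ler_log2_nat // -card_Vcc leq_imset_card.
have r_cut p : p \in r -> p.1 \subset Vcc ends T F /\ pcut ends w (flat p.1) (w p.2) \subset F.
  by move=> pr; have := run_pcut_subset no_loop T'_mst w_ge0 s_perm s_sorted pr.
apply: le_trans (sum_cost_pcut_le no_loop c_gt0 r_cut) _.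
rewrite /B /cost (mulrC 2) -mulrA mulr_suml; apply: ler_sum => f _.
by rewrite ler_pM2l // mulr_natl mulr2n lerD ?count_le ?imset_f.
Qed.
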